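(* There are no $x,y,z\in\mathcal{B}_2$ with $x+y+z=1$.
   Context: For irrational $x\in(0,1)$, $x=[a_1(x),a_2(x),\dots]$ denotes its simple continued fraction expansion. $\mathcal{B}_2$ is the set of irrational $x\in(0,1)$ with $a_k(x)\le 2$ for all $k\ge 1$. *)

From Stdlib Require Import Reals ZArith.
Open Scope R_scope.

Definition irrational (x : R) : Prop :=
  ~ exists (p q : Z), q <> 0%Z /\ x = IZR p / IZR q.

Definition gauss (x : R) : R := / x - IZR (Int_part (/ x)).

(* k-th partial quotient a_k(x) = floor(1 / T^{k-1}(x)), for k >= 1. *)
Definition cf_digit (x : R) (k : nat) : Z :=
  Int_part (/ (Nat.iter (Nat.pred k) gauss x)).

Definition B2 (x : R) : Prop :=
  0 < x < 1 /\ irrational x /\ forall k : nat, (1 <= k)%nat -> (cf_digit x k <= 2)%Z.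

(* Since a_1(x) = floor(1/x) <= 2, every x in B_2 exceeds 1/3, so three of them sum to more than 1. *)
From Stdlib Require Import Reals ZArith Lra.
Open Scope R_scope.

Lemma cf_digit1_le_gt (x : R) (n : Z) :
  0 < x -> (cf_digit x 1 <= n)%Z -> / (IZR n + 1) < x.
Proof.
  intros Hx Hd; unfold cf_digit in Hd; simpl in Hd.
  apply IZR_le in Hd.
  destruct (base_Int_part (/ x)) as [_ Hfloor].
  assert (Hinv : / x < IZR n + 1) by lra.
  assert (Hinv_pos : 0 < / x) by (apply Rinv_0_lt_compat; exact Hx).
  rewrite <- (Rinv_inv x).
  apply Rinv_lt_contravar; [apply Rmult_lt_0_compat |]; lra.
Qed.

Lemma B2_gt_third (x : R) : B2 x -> / 3 < x.
Proof.
  intros [[Hx0 _] [_ Hd]].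
  replace 3 with (IZR 2 + 1) by (simpl; lra).
  exact (cf_digit1_le_gt x 2 Hx0 (Hd 1%nat (le_n 1))).
Qed.

Theorem mainTheorem3 : ~ exists x y z : R, B2 x /\ B2 y /\ B2 z /\ x + y + z = 1.
Proof.
  intros [x [y [z [Hx [Hy [Hz Hsum]]]]]].
  apply B2_gt_third in Hx; apply B2_gt_third in Hy; apply B2_gt_third in Hz.
  lra.
Qed.
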